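(* Let $X$ be a finite alphabet, $\#$ a symbol not in $X$, $X^\# = X \cup \{\#\}$, and let $w \in \overline{X}^*$. Then the following are equivalent: (i) $w$ represents $1$ in the polycyclic monoid $P(X)$; (ii) $w$ admits a permissible padding which represents $1$ in the polycyclic monoid $P(X^\#)$; (iii) $w$ admits a permissible padding which represents $1$ in the free group $F(X^\#)$.
   Context: For an alphabet $Y$, $\overline{Y} = \{y, y^{-1} : y \in Y\}$; letters of $Y$ are positive generators and letters $y^{-1}$ negative generators. The polycyclic monoid $P(Y)$ is the monoid of partial functions on $Y^*$ (composed left to right: $fg$ means apply $f$ then $g$) generated by $y: z \mapsto zy$ (defined everywhere) and $y^{-1}: zy \mapsto z$ (defined on $Y^*y$), $y \in Y$. $F(Y)$ is the free group with presentation $\langle \overline{Y} \mid yy^{-1} = y^{-1}y = 1 \ (y \in Y)\rangle$. Permissible padding: for $w = w_1 \cdots w_n$ with $w_i \in \overline{X}$, a permissible padding of $w$ is a word $x_1 x_2 \cdots x_n (\#^{-1})^k$ over $\overline{X^\#}$ with $k \geq 0$, where $x_i = (\#^{-1})^{m_i} w_i \#$ for some $m_i \geq 0$ if $w_i$ is a negative generator, and $x_i = w_i \#$ if $w_i$ is a positive generator. *)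

From mathcomp Require Import all_boot.
Set Implicit Arguments. Unset Strict Implicit. Unset Printing Implicit Defensive.

(* A letter of \overline{Y} is a pair (y, b): b = true means the positive
   generator y, b = false means the negative generator y^{-1}. *)
Definition letter (Y : Type) := (Y * bool)%type.
Definition gword (Y : Type) := seq (letter Y).

Definition act_letter (Y : eqType) (a : letter Y) (z : seq Y) : option (seq Y) :=
  let: (y, b) := a in
  if b then Some (rcons z y)
  else match lastP z with
       | LastNil => None
       | LastRcons z' y' => if y' == y then Some z' else None
       end.

Fixpoint act_word (Y : eqType) (w : gword Y) (z : seq Y) : option (seq Y) :=
  match w with
  | [::] => Some z
  | a :: w' => match act_letter a z with
               | Some z' => act_word w' z'
               | None => None
               end
  end.

(* w represents 1 in P(Y): its partial function is the identity on all of Y^*. *)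
Definition rep1_polycyclic (Y : eqType) (w : gword Y) : Prop :=
  forall z : seq Y, act_word w z = Some z.

Definition inv_letter (Y : Type) (a : letter Y) : letter Y := (a.1, ~~ a.2).

Inductive fg_equiv (Y : Type) : gword Y -> gword Y -> Prop :=
  | fg_refl w : fg_equiv w w
  | fg_sym u v : fg_equiv u v -> fg_equiv v u
  | fg_trans u v t : fg_equiv u v -> fg_equiv v t -> fg_equiv u t
  | fg_cancel u v a : fg_equiv (u ++ a :: inv_letter a :: v) (u ++ v).

Definition rep1_freegroup (Y : Type) (w : gword Y) : Prop := fg_equiv w [::].

(* X^# = option X, with None playing the role of the new symbol #. *)
Definition hash_pos (X : Type) : letter (option X) := (None, true).
Definition hash_neg (X : Type) : letter (option X) := (None, false).

Definition pad_block (X : Type) (a : letter X) (m : nat) : gword (option X) :=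
  if a.2 then [:: (Some a.1, true); hash_pos X]
  else nseq m (hash_neg X) ++ [:: (Some a.1, false); hash_pos X].

Definition pad (X : Type) (w : gword X) (ms : seq nat) (k : nat) : gword (option X) :=
  flatten [seq pad_block p.1 p.2 | p <- zip w ms] ++ nseq k (hash_neg X).

Definition permissible_padding (X : Type) (w : gword X) (p : gword (option X)) : Prop :=
  exists (ms : seq nat) (k : nat), size ms = size w /\ p = pad w ms k.

From mathcomp Require Import all_boot.
From mathcomp Require Import order ssralg ssrnum ssrint zify.
Import Order.TTheory GRing.Theory Num.Theory.

Set Implicit Arguments. Unset Strict Implicit. Unset Printing Implicit Defensive.

(* (i) => (ii): record a run of w on X^* on a tape over X^#, whose X-letters
   form the current word.  A positive letter x writes x #; a negative letter
   x^-1 first erases with #^-1 the #'s written after the last X-letter, then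
   erases x and writes #.  The #'s left at the end are erased by (#^-1)^k.
   (ii) => (iii): if p maps s to t in P(Y), then s p = t in F(Y).
   (iii) => (i): an element of F(X^#) is written as a reduced word in the
   conjugates #^h x^(+-1) #^-h followed by a power of #; this normal form is
   computed letter by letter and is invariant under free cancellation.  Along
   a permissible padding a positive letter is pushed at the current height,
   which exceeds the height of a negative letter on top of the normal form, so
   negative letters are never cancelled.  Hence, as long as the normal form
   only has positive letters, forgetting heights it is the image of the empty
   word under the prefix of w read so far.  A padding equal to 1 in F(X^#)
   has empty normal form, so w fixes the empty word, and then every word. *)

Section PolycyclicAction.
Variable Y : eqType.

Lemma act_letter_neg_nil (y : Y) : act_letter (y, false) [::] = None.
Proof.
by rewrite /act_letter; case: {-1}[::] / lastP (erefl ([::] : seq Y)) => // s x; case: s.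
Qed.

Lemma act_letter_neg_rcons (y y' : Y) z :
  act_letter (y, false) (rcons z y') = if y' == y then Some z else None.
Proof.
rewrite /act_letter.
by case: {-1}(rcons z y') / lastP (erefl (rcons z y')) => [|s x /rcons_inj[-> ->]]; case: z.
Qed.

Lemma act_letter_catl (a : letter Y) s t z :
  act_letter a s = Some t -> act_letter a (z ++ s) = Some (z ++ t).
Proof.
case: a => y [/= [<-]|]; first by rewrite rcons_cat.
case/lastP: s => [|s y']; first by rewrite act_letter_neg_nil.
by rewrite -rcons_cat !act_letter_neg_rcons; case: (y' == y) => // -[<-].
Qed.

Lemma act_word_catl (p : gword Y) s t z :
  act_word p s = Some t -> act_word p (z ++ s) = Some (z ++ t).
Proof.
elim: p s => [|a p IHp] s /=; first by move=> [<-].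
by case E: (act_letter a s) => [s'|] // /IHp; rewrite (act_letter_catl z E).
Qed.

Lemma act_word_cons (a : letter Y) (p : gword Y) z :
  act_word (a :: p) z = obind (act_word p) (act_letter a z).
Proof. by []. Qed.

Lemma act_word_cat_Some (u v : gword Y) z z' :
  act_word u z = Some z' -> act_word (u ++ v) z = act_word v z'.
Proof. by elim: u z => [|a u IHu] z /=; [case=> -> | case: (act_letter a z)]. Qed.

Lemma act_word_nil_rep1 (p : gword Y) :
  act_word p [::] = Some [::] -> rep1_polycyclic p.
Proof. by move=> p1 z; have := act_word_catl z p1; rewrite !cats0. Qed.

Lemma act_word_fg_equiv (p : gword Y) s t :
  act_word p s = Some t ->
  fg_equiv ([seq (y, true) | y <- s] ++ p) [seq (y, true) | y <- t].
Proof.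
elim: p s => [|[y [|]] p IHp] s; first by move=> [<-]; rewrite cats0; apply: fg_refl.
  by move=> /= /IHp; rewrite map_rcons cat_rcons.
case/lastP: s => [|s y']; first by rewrite act_word_cons act_letter_neg_nil.
rewrite act_word_cons act_letter_neg_rcons; case: eqP => // -> /IHp.
rewrite map_rcons cat_rcons; apply: fg_trans.
exact: (fg_cancel _ _ (y, true)).
Qed.

Lemma rep1_polycyclic_freegroup (p : gword Y) :
  rep1_polycyclic p -> rep1_freegroup p.
Proof. by move=> p1; apply: (act_word_fg_equiv (p1 [::])). Qed.

End PolycyclicAction.

Section PaddingSimulation.
Variable X : eqType.

Definition pad_blocks (w : gword X) (ms : seq nat) : gword (option X) :=
  flatten [seq pad_block p.1 p.2 | p <- zip w ms].

Lemma padE (w : gword X) ms k : pad w ms k = pad_blocks w ms ++ nseq k (hash_neg X).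
Proof. by []. Qed.

Lemma pad_blocks_cons a (w : gword X) m ms :
  pad_blocks (a :: w) (m :: ms) = pad_block a m ++ pad_blocks w ms.
Proof. by []. Qed.

Lemma act_hash_negs m (T : seq (option X)) :
  act_word (nseq m (hash_neg X)) (T ++ nseq m None) = Some T.
Proof.
elim: m T => [|m IHm] T; first by rewrite cats0.
rewrite -[in T ++ _]addn1 nseqD catA cats1 act_word_cons act_letter_neg_rcons eqxx; exact: IHm.
Qed.

Lemma pmap_id_nil (T : seq (option X)) : pmap id T = [::] -> T = nseq (size T) None.
Proof. by elim: T => [|[x|] T IHT] //= /IHT <-. Qed.

Lemma pmap_id_rcons (T : seq (option X)) s x :
  pmap id T = rcons s x ->
  exists T1 m, T = rcons T1 (Some x) ++ nseq m None /\ pmap id T1 = s.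
Proof.
elim/last_ind: T => [|T [y|] IHT]; first by case: s.
  rewrite -cats1 pmap_cat /= cats1 => /rcons_inj[<- <-].
  by exists T, 0; rewrite cats0 cats1.
rewrite -cats1 pmap_cat /= cats0 => /IHT[T1 [m [-> T1s]]].
by exists T1, m.+1; rewrite -catA -addn1 nseqD.
Qed.

Lemma pad_blocks_simulate (w : gword X) (T : seq (option X)) t :
  act_word w (pmap id T) = Some t ->
  exists2 ms, size ms = size w &
    exists2 T', act_word (pad_blocks w ms) T = Some T' & pmap id T' = t.
Proof.
elim: w T => [|[x [|]] w IHw] T; first by move=> [<-]; exists [::]; last exists T.
  have pmapT : pmap id (rcons (rcons T (Some x)) None) = rcons (pmap id T) x.
    by rewrite -!cats1 !pmap_cat cats0.
  move=> /=; rewrite -pmapT => /IHw[ms sz_ms [T' wT' T't]].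
  by exists (0 :: ms); [rewrite /= sz_ms | exists T'].
case/lastP E: (pmap id T) => [|s y]; first by rewrite act_word_cons act_letter_neg_nil.
rewrite act_word_cons act_letter_neg_rcons; case: eqP => // yx; subst y.
have [T1 [m [-> T1s]]] := pmap_id_rcons E.
have pmapT1 : pmap id (rcons T1 None) = s by rewrite -cats1 pmap_cat cats0.
rewrite /= -pmapT1 => /IHw[ms sz_ms [T' wT' T't]].
exists (m :: ms); first by rewrite /= sz_ms.
exists T' => //.
rewrite pad_blocks_cons [pad_block _ _]/= -catA (act_word_cat_Some _ (act_hash_negs _ _)).
by rewrite act_word_cons act_letter_neg_rcons eqxx.
Qed.

Lemma rep1_polycyclic_padding (w : gword X) :
  rep1_polycyclic w -> exists p, permissible_padding w p /\ rep1_polycyclic p.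
Proof.
move=> w1; have [ms sz_ms [T wT /pmap_id_nil T0]] := pad_blocks_simulate (T := [::]) (w1 [::]).
exists (pad w ms (size T)); split; first by exists ms, (size T).
apply: act_word_nil_rep1.
by rewrite padE (act_word_cat_Some _ wT) T0 size_nseq -[nseq _ None]cat0s act_hash_negs.
Qed.

End PaddingSimulation.

Section FreeReduction.
Variable Y : eqType.

(* Reduced words are stored reversed, so that [push] appends a letter and
   performs the free cancellation at the end of the word. *)
Definition push (a : letter Y) (Q : gword Y) : gword Y :=
  if Q is b :: Q' then if b == inv_letter a then Q' else a :: Q else [:: a].

Definition reduced (Q : gword Y) : bool := sorted (fun a b => a != inv_letter b) Q.

Lemma inv_letterK : involutive (@inv_letter Y).
Proof. by case=> y b; rewrite /inv_letter negbK. Qed.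

Lemma eq_inv_letterC (a b : letter Y) : (a == inv_letter b) = (b == inv_letter a).
Proof. by apply/eqP/eqP => ->; rewrite inv_letterK. Qed.

Lemma reduced_push a Q : reduced Q -> reduced (push a Q).
Proof.
case: Q => //= b Q redQ; case: ifP => [_|ba]; first exact: path_sorted redQ.
by rewrite /= redQ eq_inv_letterC ba.
Qed.

Lemma push_inv a Q : reduced Q -> push (inv_letter a) (push a Q) = Q.
Proof.
case: Q => [|b Q] /=; first by rewrite inv_letterK eqxx.
case: ifP => [/eqP-> | _] redQ /=; last by rewrite inv_letterK eqxx.
case: Q redQ => //= c Q /andP[ac _].
have ca : (c == a) = false by apply: contraNF ac => /eqP->.
by rewrite inv_letterK ca.
Qed.

End FreeReduction.

Section HeightNormalForm.
Variable X : eqType.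
Local Open Scope ring_scope.

(* (Q, h) stands for q #^h, where q is the reduced word stored reversed in Q,
   over the letters ((x, i), b) standing for #^i x^(+-1) #^-i. *)
Definition nf_state := (gword (X * int) * int)%type.

Definition nf_step (a : letter (option X)) (st : nf_state) : nf_state :=
  let: (Q, h) := st in
  match a with
  | (Some x, b) => (push ((x, h), b) Q, h)
  | (None, b) => (Q, if b then h + 1 else h - 1)
  end.

Definition nf (p : gword (option X)) (st : nf_state) : nf_state :=
  foldl (fun st a => nf_step a st) st p.

Lemma nf_cat u v st : nf (u ++ v) st = nf v (nf u st).
Proof. exact: foldl_cat. Qed.

Lemma nf_hash_negs m Q h : nf (nseq m (hash_neg X)) (Q, h) = (Q, h - m%:Z).
Proof. by elim: m h => [|m IHm] h /=; [rewrite subr0 | rewrite IHm; congr (_, _); lia]. Qed.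

Lemma reduced_nf p st : reduced st.1 -> reduced (nf p st).1.
Proof.
by elim: p st => [|[[x|] b] p IHp] [Q h] //= redQ; apply: IHp => //; apply: reduced_push.
Qed.

Lemma nf_step_inv a st : reduced st.1 -> nf_step (inv_letter a) (nf_step a st) = st.
Proof.
case: st => Q h; case: a => [[x|] [|]] /= redQ; last 2 first.
- by rewrite addrK.
- by rewrite subrK.
- by rewrite (push_inv ((x, h), true) redQ).
- by rewrite (push_inv ((x, h), false) redQ).
Qed.

Lemma nf_fg_equiv u v : fg_equiv u v -> forall st, reduced st.1 -> nf u st = nf v st.
Proof.
elim=> {u v} [//|u v _ IH st /IH //|u v t _ IH1 _ IH2 st red_st|u v a st red_st].
  by rewrite IH1 // IH2.
by rewrite !nf_cat /= nf_step_inv // reduced_nf.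
Qed.

Definition below (c c' : int * bool) : bool := ~~ c'.2 ==> c.2 ==> (c'.1 < c.1).

(* Each negative letter lies strictly lower than the positive letter, or the
   current height, just above it. *)
Definition admissible (st : nf_state) : bool :=
  path below (st.2, true) [seq (c.1.2, c.2) | c <- st.1].

Definition stack_word (Q : gword (X * int)) : seq X := rev [seq c.1.1 | c <- Q].

Lemma path_below_le (i j : int) s :
  i <= j -> path below (i, true) s -> path below (j, true) s.
Proof.
case: s => //= -[k b] s ij /andP[ki ->]; rewrite andbT.
by apply: contraLR ki; rewrite /below /=; case: b => //=; lia.
Qed.

Lemma nf_pad_block a m st : admissible st ->
  let st' := nf (pad_block a m) st in
  admissible st' /\
  (all snd st'.1 -> all snd st.1 /\ act_letter a (stack_word st.1) = Some (stack_word st'.1)).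
Proof.
case: st => Q h; case: a => x [] adm.
- rewrite /=; have -> : push (x, h, true) Q = (x, h, true) :: Q.
    by case: Q adm => //= d Q /andP[hd _]; case: eqP hd => // ->; rewrite /below /= ltxx.
  by split=> // Qpos; split=> //; rewrite /stack_word map_cons rev_cons.
- rewrite nf_cat nf_hash_negs [nf _ (Q, _)]/=; set h' := h - m%:Z.
  have below_top : below (h' + 1, true) (h', false) by rewrite /below /= ltrDl ltr01.
  case: Q adm => [|d Q] adm; first by split=> //; rewrite /admissible /= below_top.
  rewrite [push _ _]/=; case: ifP => [/eqP dE | _]; last first.
    by split=> //; rewrite /admissible /= below_top {1}/below /= implybT; case/andP: adm.
  subst d; have adm' : path below (h', true) [seq (c.1.2, c.2) | c <- Q] := adm.
  split; first by apply: path_below_le adm'; rewrite lerDl.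
  by rewrite /stack_word map_cons rev_cons act_letter_neg_rcons eqxx => Qpos.
Qed.

Lemma nf_pad_blocks (w : gword X) ms st :
  size ms = size w -> admissible st ->
  let st' := nf (pad_blocks w ms) st in
  all snd st'.1 -> all snd st.1 /\ act_word w (stack_word st.1) = Some (stack_word st'.1).
Proof.
elim: w ms st => [|a w IHw] [|m ms] st //= [sz_ms] adm.
have [adm' block] := nf_pad_block a m adm.
by rewrite pad_blocks_cons nf_cat => /(IHw _ _ sz_ms adm') [/block [-> ->] ->].
Qed.

Lemma padding_freegroup_rep1_polycyclic (w : gword X) p :
  permissible_padding w p -> rep1_freegroup p -> rep1_polycyclic w.
Proof.
move=> [ms [k [sz_ms ->]]] /nf_fg_equiv /(_ ([::], 0) isT).
have := nf_pad_blocks sz_ms (isT : admissible ([::], 0)).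
rewrite padE nf_cat; case: (nf (pad_blocks w ms) _) => Q h /= wQ.
rewrite nf_hash_negs => -[Q0 _]; subst Q.
by apply: act_word_nil_rep1; case: wQ.
Qed.

End HeightNormalForm.

Theorem proposition4p10 (X : finType) (w : gword X) :
  (rep1_polycyclic w <->
     exists p, permissible_padding w p /\ rep1_polycyclic p) /\
  ((exists p, permissible_padding w p /\ rep1_polycyclic p) <->
     exists p, permissible_padding w p /\ rep1_freegroup p).
Proof.
have padding_rep1 p : permissible_padding w p -> rep1_polycyclic p -> rep1_polycyclic w.
  by move=> wp /rep1_polycyclic_freegroup; apply: padding_freegroup_rep1_polycyclic.
split; split.
- exact: rep1_polycyclic_padding.
- by case=> p [wp p1]; apply: padding_rep1 wp p1.
- by case=> p [wp /rep1_polycyclic_freegroup p1]; exists p.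
- by case=> p [wp p1]; apply/rep1_polycyclic_padding/(padding_freegroup_rep1_polycyclic wp p1).
Qed.
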